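(* Let $Y$, $Z$ be bigraphs and $f,g: Y\to Z$ bigraph homomorphisms which are $\times$-homotopic. Then for every bigraph $X$ the induced order-preserving maps $f_*, g_*: \mathrm{Hom}_{/K_2}(X,Y)\to \mathrm{Hom}_{/K_2}(X,Z)$, given by $(f_*\eta)(v)=f(\eta(v))$, are homotopic (as maps of geometric realizations).
   Context: A graph is a set $V$ with a symmetric relation $E\subset V\times V$ (loops allowed); $K_2$ has vertices $0,1$ and edges $(0,1),(1,0)$. A bigraph is a graph $X$ with a graph homomorphism $\varepsilon_X: X\to K_2$; $V_i(X)=\varepsilon_X^{-1}(i)$; bigraph homomorphisms are graph homomorphisms commuting with colorings. A multi-homomorphism $\eta$ from $X$ to $Y$ assigns to each $v\in V(X)$ a finite nonempty subset $\eta(v)\subset V(Y)$ such that $(v,w)\in E(X)$ implies $\eta(v)\times\eta(w)\subset E(Y)$; it is 2-colored if $\eta(v)\subset V_i(Y)$ for $v\in V_i(X)$. $\mathrm{Hom}_{/K_2}(X,Y)$ is the poset of 2-colored multi-homomorphisms ordered by $\eta\le\eta'$ iff $\eta(v)\subset\eta'(v)$ for all $v$; a bigraph homomorphism is identified with the multi-homomorphism $v\mapsto\{f(v)\}$. Bigraph homomorphisms $f,g:Y\to Z$ are $\times$-homotopic if they lie in the same connected component of $\mathrm{Hom}_{/K_2}(Y,Z)$. Posets are regarded as spaces via geometric realizations of order complexes. *)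

From HB Require Import structures.
From mathcomp Require Import all_boot all_order all_algebra.
From mathcomp Require Import all_classical all_reals topology.
From mathcomp Require Import Rstruct Rstruct_topology.
Set Implicit Arguments. Unset Strict Implicit. Unset Printing Implicit Defensive.
Import Order.TTheory GRing.Theory Num.Theory.
Local Open Scope classical_set_scope.
Local Open Scope ring_scope.

Notation R := Rdefinitions.R.

(* A graph is a type with a symmetric relation (loops allowed); a bigraph has a
   graph homomorphism to K_2, i.e. a colouring eps : V -> bool (0 = false,
   1 = true) with adjacent vertices receiving different colours. *)
Record bigraph := Bigraph {
  bV : Type;
  bE : bV -> bV -> Prop;
  bE_sym : forall v w, bE v w -> bE w v;
  beps : bV -> bool;
  beps_hom : forall v w, bE v w -> beps v <> beps w }.

Definition bihom (Y Z : bigraph) (f : bV Y -> bV Z) : Prop :=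
  (forall v w, bE v w -> bE (f v) (f w)) /\ (forall v, beps (f v) = beps v).

Definition multihom2 (X Y : bigraph) (eta : bV X -> set (bV Y)) : Prop :=
  [/\ (forall v, finite_set (eta v) /\ eta v !=set0),
      (forall v w, bE v w -> forall a b, eta v a -> eta w b -> bE a b) &
      (forall v a, eta v a -> beps a = beps v)].

(* ambient type of multi-homomorphism candidates (with a classical choice
   structure, needed for finite sums over it) *)
Definition mhT (X Y : bigraph) := bV X -> set (bV Y).

(* The poset Hom_{/K2}(X,Y): carrier [multihom2 X Y] inside the type
   bV X -> set (bV Y), ordered by pointwise inclusion. *)
Definition homle (X Y : bigraph) (eta eta' : bV X -> set (bV Y)) : Prop :=
  forall v, eta v `<=` eta' v.

Definition mh_of (X Y : bigraph) (f : bV X -> bV Y) : bV X -> set (bV Y) :=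
  fun v => [set f v].

Definition fstar (X Y Z : bigraph) (f : bV Y -> bV Z)
  (eta : mhT X Y) : mhT X Z := fun v => f @` eta v.

(* A poset is given by an ambient type T, its carrier A : set T and its order
   le.  A point of the realization of the order complex is a finitely
   supported function t : T -> R, nonnegative, with total mass 1, whose support
   is a chain of A. *)
Definition supp (T : Type) (t : T -> R) : set T := [set x | t x != 0].

Definition geom_pt (T : choiceType) (A : set T) (le : T -> T -> Prop) (t : T -> R)
  : Prop :=
  [/\ finite_set (supp t), supp t `<=` A, (forall x, 0 <= t x),
      \sum_(x \in supp t) t x = 1 &
      (forall x y, supp t x -> supp t y -> le x y \/ le y x)].

Definition realization (T : choiceType) (A : set T) (le : T -> T -> Prop) :=
  {t : T -> R | geom_pt A le t}.


(* The weak (CW) topology: U is open iff its trace on every finite subcomplex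
   (points supported in a finite set S) is open for the Euclidean topology. *)
Definition weak_open (T : choiceType) (A : set T) (le : T -> T -> Prop)
  (U : set (realization A le)) : Prop :=
  forall (S : set T), finite_set S -> forall p, U p -> supp (sval p) `<=` S ->
  exists2 e : R, 0 < e & forall q, supp (sval q) `<=` S ->
    (forall x, `|sval q x - sval p x| < e) -> U q.

Section WeakTop.
Variables (T : choiceType) (A : set T) (le : T -> T -> Prop).

HB.instance Definition _ := gen_eqMixin (realization A le).
HB.instance Definition _ := gen_choiceMixin (realization A le).

Let weak_openT : weak_open [set: realization A le].
Proof. by move=> S _ p _ _; exists 1. Qed.

Let weak_openI : setI_closed (@weak_open T A le).
Proof.
move=> U V oU oV S fS p [Up Vp] sp.
have [e1 e1gt0 H1] := oU S fS p Up sp.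
have [e2 e2gt0 H2] := oV S fS p Vp sp.
exists (Num.min e1 e2); first by rewrite lt_min e1gt0 e2gt0.
move=> q sq hq; split.
  by apply: H1 => // x; apply: (lt_le_trans (hq x)); rewrite ge_min lexx.
by apply: H2 => // x; apply: (lt_le_trans (hq x)); rewrite ge_min lexx orbT.
Qed.

Let weak_open_bigU (I : Type) (f : I -> set (realization A le)) :
  (forall i, weak_open (f i)) -> weak_open (\bigcup_i f i).
Proof.
move=> hf S fS p [i _ fip] sp.
have [e egt0 H] := hf i S fS p fip sp.
by exists e => // q sq hq; exists i => //; apply: H.
Qed.

HB.instance Definition _ := isOpenTopological.Build (realization A le)
  weak_openT weak_openI weak_open_bigU.
End WeakTop.

Definition vertex (T : Type) (x : T) : T -> R :=
  fun y => if `[< y = x >] then 1 else 0.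

(* realization of an order-preserving map phi : affine extension *)
Definition push (T T' : choiceType) (phi : T -> T') (t : T -> R) : T' -> R :=
  fun y => \sum_(x \in [set x | supp t x /\ phi x = y]) t x.

Definition HomK2 (X Y : bigraph) : topologicalType :=
  @realization (mhT X Y) (@multihom2 X Y) (@homle X Y).

(* f and g are x-homotopic: same connected component of |Hom_{/K2}(Y,Z)| *)
Definition xhomotopic (Y Z : bigraph) (f g : bV Y -> bV Z) : Prop :=
  exists (p q : HomK2 Y Z),
    sval p = vertex (mh_of f : mhT Y Z) /\ sval q = vertex (mh_of g : mhT Y Z) /\
    connected_component setT p q.

From HB Require Import structures.
From mathcomp Require Import all_boot all_order all_algebra.
From mathcomp Require Import all_classical all_reals topology.
From mathcomp Require Import Rstruct Rstruct_topology.
From mathcomp Require Import lra ring.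
From mathcomp Require Import finmap.
From mathcomp Require Import num_normedtype normed_module.
Set Implicit Arguments. Unset Strict Implicit. Unset Printing Implicit Defensive.
Import Order.TTheory GRing.Theory Num.Theory.
Local Open Scope classical_set_scope.
Local Open Scope ring_scope.

(* Post-composition with a 2-coloured multi-homomorphism eta is an order-preserving
   map eta_* between Hom posets, and eta <= eta' gives eta_* <= eta'_* pointwise.
   Two comparable order-preserving maps phi <= psi have homotopic realizations:
   at time s a point t supported on a chain x_1 < ... < x_k is sent along phi for
   the part of its mass, accumulated from the bottom of the chain, lying below
   level 1 - s, and along psi for the rest; the image is supported on the chain
   phi x_1 <= ... <= phi x_j <= psi x_j <= ... <= psi x_k.  Continuity for the
   weak topology reduces to a Lipschitz estimate on each finite subcomplex.
   Hence the points of |Hom(Y, Z)| whose support contains some eta with eta_*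
   homotopic to f_* form an open and closed set; it contains the vertex f, so
   it contains the whole component of f, in particular the vertex g. *)

Section FinitelySupportedSums.
Variable T : choiceType.
Implicit Types (D : set T) (f : T -> R) (X : {fset T}).

Lemma fsbig_fset D f X : (forall i, D i -> f i != 0 -> i \in X) ->
  \sum_(i \in D) f i = \sum_(i <- X) (if i \in D then f i else 0).
Proof.
move=> DX; rewrite fsbig_mkcond (fsbigTE X) // => i iX; rewrite /patch.
case: ifP => // /set_mem Di; apply/eqP; apply: contraNT iX; exact: DX.
Qed.

Lemma fsbig_supp f X : (forall i, f i != 0 -> i \in X) ->
  \sum_(i \in supp f) f i = \sum_(i <- X) f i.
Proof.
move=> fX; rewrite (fsbig_fset (X := X)) => [|i _]; last exact: fX.
apply: eq_bigr => i _; case: ifPn => // /negP ni; apply/esym/eqP.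
by apply: contraT => fi; exfalso; apply/ni/mem_set.
Qed.

Lemma sumr_pred1_seq (T' : eqType) (r : seq T') (i0 : T') (c : R) :
  i0 \in r -> uniq r -> \sum_(i <- r) (if i0 == i then c else 0) = c.
Proof.
move=> i0r ur; rewrite (bigD1_seq i0) //= eqxx big1 ?addr0 // => i.
by rewrite eq_sym => /negbTE ->.
Qed.

Lemma ler_norm_sum_size (r : seq T) (F : T -> R) (B : R) :
  (forall i, `|F i| <= B) -> `|\sum_(i <- r) F i| <= (size r)%:R * B.
Proof.
move=> FB; elim: r => [|i r IH]; first by rewrite big_nil normr0 mul0r.
rewrite big_cons /= -addn1 natrD mulrDl mul1r addrC.
by apply: le_trans (ler_normD _ _) _; apply: lerD.
Qed.

End FinitelySupportedSums.

Lemma supp_fset_set (T : choiceType) (S : set T) (t : T -> R) :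
  finite_set S -> supp t `<=` S -> forall x, t x != 0 -> x \in fset_set S.
Proof. by move=> finS tS x tx; rewrite in_fset_set //; apply/mem_set/tS. Qed.

Lemma supp_vertex (T : Type) (x : T) : supp (vertex x) = [set x].
Proof.
apply/seteqP; split => y; rewrite /supp /vertex /=.
  by case: asboolP => // _; rewrite eqxx.
by move=> ->; rewrite asboolT // oner_neq0.
Qed.

Section Realization.
Variables (T : choiceType) (A : set T) (le : T -> T -> Prop).
Implicit Types (t : T -> R) (p q : realization A le).

Lemma realization_inj p q : sval p = sval q -> p = q.
Proof. by case: p q => t tP [u uP] /= tu; apply: eq_exist. Qed.

Lemma geom_pt_sum t (X : {fset T}) : geom_pt A le t ->
  (forall x, t x != 0 -> x \in X) -> \sum_(x <- X) t x = 1.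
Proof. by case=> _ _ _ t1 _ tX; rewrite -t1 (fsbig_supp tX). Qed.

Lemma geom_pt_supp_neq0 t : geom_pt A le t -> exists x, supp t x.
Proof.
case=> _ _ _ t1 _; apply: contrapT => supp0; move: t1.
suff -> : supp t = set0 by rewrite fsbig_set0 => /eqP; rewrite eq_sym oner_eq0.
by apply/seteqP; split => // x tx; apply: supp0; exists x.
Qed.

Lemma connected_component_clopen (P : topologicalType) (O : set P) x y :
  open O -> open (~` O) -> O x -> connected_component setT x y -> O y.
Proof.
move=> oO oC Ox [C [Cx _ cC] Cy].
suff CO : C `&` O = C by move: Cy; rewrite -CO => -[].
apply: cC; first by exists x.
  by exists O.
by exists O => //; rewrite -(setCK O); apply: open_closedC.
Qed.

(* The points whose support meets P form an open and closed set. *)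
Lemma realization_component_supp (P : T -> Prop) :
  (forall x y, A x -> A y -> le x y -> P x <-> P y) ->
  forall p q, connected_component setT p q ->
  (exists2 x, supp (sval p) x & P x) -> exists2 y, supp (sval q) y & P y.
Proof.
move=> Pcomp p q pq Pp.
pose O := [set r : realization A le | exists2 x, supp (sval r) x & P x].
have supp_near (r : realization A le) x : supp (sval r) x -> exists2 e : R, 0 < e &
    forall r' : realization A le, `|sval r' x - sval r x| < e -> supp (sval r') x.
  case: (proj2_sig r) => _ _ r_ge0 _ _ rx.
  exists (sval r x); first by rewrite lt0r rx r_ge0.
  move=> r' near_r; apply/eqP => r'x; move: near_r.
  by rewrite r'x sub0r normrN ger0_norm ?ltxx.
apply: (connected_component_clopen (O := O) _ _ Pp pq).
  suff : weak_open O by [].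
  move=> S _ r [x rx Px] _; have [e e_gt0 near_x] := supp_near r x rx.
  by exists e => // r' _ r'r; exists x => //; apply: near_x.
suff : weak_open (~` O) by [].
move=> S _ r nOr _; have [x rx] := geom_pt_supp_neq0 (proj2_sig r).
have [e e_gt0 near_x] := supp_near r x rx.
exists e => // r' _ r'r [y r'y Py]; apply: nOr; exists x => //.
have r'x := near_x r' (r'r x).
case: (proj2_sig r') => _ r'A _ _ r'chain.
by case: (r'chain y x r'y r'x) => lyx;
  [apply/(Pcomp y x) | apply/(Pcomp x y)] => //; apply: r'A.
Qed.

End Realization.

Lemma nbhs_norm_lt (s e : R) : 0 < e -> nbhs s [set s' | `|s' - s| < e].
Proof.
by move=> e_gt0; apply/nbhs_ballP; exists e => // y; rewrite /ball /= distrC.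
Qed.

Section WeakContinuity.
Variables (T T' : choiceType) (A : set T) (le : T -> T -> Prop).
Variables (A' : set T') (le' : T' -> T' -> Prop).
Variable H : realization A le * R -> realization A' le'.

Hypothesis H_supp : forall S : set T, finite_set S ->
  exists2 S' : set T', finite_set S' &
    forall p s, supp (sval p) `<=` S -> supp (sval (H (p, s))) `<=` S'.

Hypothesis H_lipschitz : forall S : set T, finite_set S ->
  exists2 M : R, 0 < M & forall p q s s' d,
    supp (sval p) `<=` S -> supp (sval q) `<=` S -> 0 <= d ->
    (forall x, `|sval p x - sval q x| <= d) ->
    forall z, `|sval (H (p, s)) z - sval (H (q, s')) z| <= M * (d + `|s - s'|).

Lemma open_tube (U : set (realization A' le')) (J : set R) : open U -> compact J ->
  open [set p | forall s, J s -> U (H (p, s))].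
Proof.
move=> oU cJ; suff : weak_open [set p | forall s, J s -> U (H (p, s))] by [].
move=> S finS q UqJ qS.
have [S' finS' HS'] := H_supp finS; have [M M_gt0 HM] := H_lipschitz finS.
pose near_q e := [set q' : realization A le |
  supp (sval q') `<=` S /\ forall x, `|sval q' x - sval q x| < e].
pose F := filter_from [set e : R | 0 < e] near_q.
have FF : Filter F.
  apply: filter_from_filter; first by exists 1; rewrite /= ltr01.
  move=> e1 e2 e1_gt0 e2_gt0; exists (Num.min e1 e2).
    by rewrite /= lt_min e1_gt0 e2_gt0.
  by move=> q' [q'S q'q]; split; split => // x; apply: (lt_le_trans (q'q x));
    rewrite ge_min lexx ?orbT.
have [|e e_gt0 near_qJ] := proj1 (compact_near_coveringP J) cJ _ F
    (fun q' s => U (H (q', s))) FF.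
  move=> s Js; have [e1 e1_gt0 HU] := oU S' finS' (H (q, s)) (UqJ s Js) (HS' q s qS).
  pose d := e1 / M / 2; have d_gt0 : 0 < d by rewrite !divr_gt0.
  exists ([set s' | `|s' - s| < d], near_q d).
    by split; [exact: nbhs_norm_lt | exists d].
  move=> [s' q'] [/= ss' [q'S q'q]]; apply: HU; first exact: HS'.
  move=> z; apply: le_lt_trans
    (HM _ _ _ _ d q'S qS (ltW d_gt0) (fun x => ltW (q'q x)) z) _.
  by rewrite mulrC -ltr_pdivlMr //; move: ss'; rewrite /d; lra.
by exists e => // q' q'S q'q; apply: (near_qJ q').
Qed.

Lemma weak_lipschitz_continuous : continuous H.
Proof.
apply/continuousP => U oU; rewrite openE => -[p s] Ups.
have finp : finite_set (supp (sval p)) by case: (proj2_sig p).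
have [S' finS' HS'] := H_supp finp; have [M M_gt0 HM] := H_lipschitz finp.
have [e e_gt0 HU] := oU S' finS' (H (p, s)) Ups (HS' p s (@subset_refl _ _)).
pose d := e / M / 2; have d_gt0 : 0 < d by rewrite !divr_gt0.
pose J := `[s - d, s + d]%classic.
have UJ s' : J s' -> U (H (p, s')).
  rewrite /J /= in_itv /= => /andP[s'l s'r]; apply: HU; first exact: HS'.
  move=> z; apply: le_lt_trans
    (HM p p s' s 0 (@subset_refl _ _) (@subset_refl _ _) (lexx 0) _ z) _.
    by move=> x; rewrite subrr normr0.
  rewrite mulrC -ltr_pdivlMr // add0r.
  have : `|s' - s| <= d by rewrite ler_norml; apply/andP; split; lra.
  by have := divr_gt0 e_gt0 M_gt0; rewrite /d; lra.
exists ([set q | forall s', J s' -> U (H (q, s'))], [set s' | `|s' - s| < d]) => /=.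
  split; last exact: nbhs_norm_lt.
  by apply: open_nbhs_nbhs; split => //; apply: open_tube => //; exact: segment_compact.
move=> [q s'] [/= UqJ ss']; apply: UqJ; rewrite /J /= in_itv /=.
by move: ss'; rewrite ltr_norml => /andP[? ?]; apply/andP; split; lra.
Qed.

End WeakContinuity.

Lemma continuous_affine_snd (P : topologicalType) (a b : R) :
  continuous (fun ps : P * R => (ps.1, a * ps.2 + b)).
Proof.
move=> [p s] W /= [[V I] [/= nV nI] VIW].
move/nbhs_ballP: nI => [e /= e_gt0 eI].
have a1_gt0 : 0 < `|a| + 1 by have := normr_ge0 a; lra.
exists (V, ball s (e / (`|a| + 1))) => /=.
  by split => //; apply/nbhsx_ballx/divr_gt0.
move=> [q s'] [/= Vq]; rewrite /ball /= => ss'; apply: VIW; split => //=; apply: eI.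
rewrite /ball /=.
have -> : a * s + b - (a * s' + b) = a * (s - s') by ring.
rewrite normrM; have : `|s - s'| * (`|a| + 1) < e by rewrite -ltr_pdivlMr.
have := normr_ge0 (s - s'); have := normr_ge0 a; nra.
Qed.

Lemma closed_snd_preimage (P : topologicalType) (B : set R) :
  closed B -> closed [set ps : P * R | B ps.2].
Proof. by move=> cB; apply: preimage_closed cB => ps _; exact: cvg_snd. Qed.

Section PushHomotopy.
Variables (T T' : choiceType) (A : set T) (le : T -> T -> Prop).
Variables (A' : set T') (le' : T' -> T' -> Prop).

Definition push_homotopic (f g : T -> T') : Prop :=
  exists H : realization A le * R -> realization A' le', continuous H /\
    (forall p, sval (H (p, 0)) = push f (sval p)) /\
    (forall p, sval (H (p, 1)) = push g (sval p)).

Lemma push_homotopic_sym f g : push_homotopic f g -> push_homotopic g f.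
Proof.
move=> [H [cH [H0 H1]]]; exists (H \o (fun ps => (ps.1, -1 * ps.2 + 1))).
split.
  by move=> ps; apply: continuous_comp; [exact: continuous_affine_snd | exact: cH].
by split => p /=; [rewrite mulr0 add0r H1 | rewrite mulr1 addNr H0].
Qed.

Lemma push_homotopic_trans f g h :
  push_homotopic f g -> push_homotopic g h -> push_homotopic f h.
Proof.
move=> [H1 [cH1 [H10 H11]]] [H2 [cH2 [H20 H21]]].
pose G1 := H1 \o (fun ps : realization A le * R => (ps.1, 2 * ps.2 + 0)).
pose G2 := H2 \o (fun ps : realization A le * R => (ps.1, 2 * ps.2 + -1)).
have cG1 : continuous G1.
  by move=> ps; apply: continuous_comp; [exact: continuous_affine_snd | exact: cH1].
have cG2 : continuous G2.
  by move=> ps; apply: continuous_comp; [exact: continuous_affine_snd | exact: cH2].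
exists (fun ps => if ps.2 <= 2^-1 then G1 ps else G2 ps); split; last first.
  split => p /=; first by rewrite ifT ?invr_ge0 ?ler0n // /G1 /= mulr0 addr0 H10.
  rewrite ifF; last by apply/negbTE; rewrite -ltNge invf_lt1 ?ltr1n.
  by rewrite /G2 /= mulr1 -[2]/(1 + 1) -addrA subrr addr0 H21.
apply/continuous_subspace_setT.
have -> : [set: realization A le * R] =
    [set ps | ps.2 <= 2^-1] `|` [set ps | 2^-1 <= ps.2].
  apply/seteqP; split => // ps _ /=.
  by case: (leP ps.2 2^-1) => s_half; [left | right; exact: ltW].
apply: withinU_continuous.
- by apply: (@closed_snd_preimage _ [set r | r <= 2^-1]); exact: closed_le.
- by apply: (@closed_snd_preimage _ [set r | 2^-1 <= r]); exact: closed_ge.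
- apply: (@subspace_eq_continuous _ _ _ G1); last exact: continuous_subspaceT.
  by move=> ps /set_mem /= s_half; rewrite /from_subspace s_half.
apply: (@subspace_eq_continuous _ _ _ G2); last exact: continuous_subspaceT.
move=> [p s] /set_mem /= half_le_s; rewrite /from_subspace /=.
case: ifPn => // s_le_half.
have -> : s = 2^-1 by apply/eqP; rewrite eq_le s_le_half half_le_s.
apply: realization_inj; rewrite /G1 /G2 /= mulfV ?pnatr_eq0 // addr0 subrr.
by rewrite H11 H20.
Qed.

End PushHomotopy.

Section Push.
Variables (T T' : choiceType) (f : T -> T').
Implicit Types (u : T -> R) (z : T').

Lemma push_fset u z (X : {fset T}) : (forall x, u x != 0 -> x \in X) ->
  push f u z = \sum_(x <- X) (if f x == z then u x else 0).
Proof.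
move=> uX; rewrite /push (fsbig_fset (X := X)) => [|x [ux _] _]; last exact: uX.
apply: eq_bigr => x _; case: ifPn => [/set_mem [_ ->]|/negP nx]; first by rewrite eqxx.
case: eqP => // fx; apply/esym/eqP; apply: contraT => ux.
by exfalso; apply/nx/mem_set.
Qed.

Lemma push_neq0 u z : push f u z != 0 -> exists2 x, u x != 0 & f x = z.
Proof.
move=> uz; apply: contrapT => nx; move: uz; rewrite /push.
suff -> : [set x | supp u x /\ f x = z] = set0 by rewrite fsbig_set0 eqxx.
by apply/seteqP; split => // x [ux fx]; apply: nx; exists x.
Qed.

Lemma push0 z : push f (fun=> 0) z = 0.
Proof. exact: fsbig1. Qed.

Lemma push_lipschitz (X : {fset T}) u u' z B :
  (forall x, u x != 0 -> x \in X) -> (forall x, u' x != 0 -> x \in X) ->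
  0 <= B -> (forall x, `|u x - u' x| <= B) ->
  `|push f u z - push f u' z| <= (size X)%:R * B.
Proof.
move=> uX u'X B_ge0 uu'; rewrite (push_fset _ uX) (push_fset _ u'X) -sumrB.
by apply: ler_norm_sum_size => x; case: ifP => _; rewrite ?subrr ?normr0.
Qed.

End Push.

Definition clamp (s : R) : R := Num.min 1 (Num.max 0 s).

Lemma clampP s : (clamp s = 0 /\ s <= 0) \/ (clamp s = s /\ 0 <= s <= 1) \/
  (clamp s = 1 /\ 1 <= s).
Proof.
by rewrite /clamp; case: (leP 0 s); [case: (leP 1 s) | case: (leP 1 0)]; lra.
Qed.

Lemma clamp0 : clamp 0 = 0.
Proof. by case: (clampP 0); lra. Qed.

Lemma clamp1 : clamp 1 = 1.
Proof. by case: (clampP 1); lra. Qed.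

Lemma clamp_lipschitz s s' : `|clamp s - clamp s'| <= `|s - s'|.
Proof.
have := ler_norm (s - s'); have := ler_norm (s' - s); rewrite distrC ler_norml.
by case: (clampP s) => [[-> ?]|[[-> /andP[? ?]]|[-> ?]]];
  case: (clampP s') => [[-> ?]|[[-> /andP[? ?]]|[-> ?]]] => *; apply/andP; split; lra.
Qed.

Lemma max0_minP (a b : R) : (Num.max 0 (Num.min a b) = 0 /\ (a <= 0 \/ b <= 0)) \/
  (Num.max 0 (Num.min a b) = a /\ 0 <= a /\ a <= b) \/
  (Num.max 0 (Num.min a b) = b /\ 0 <= b /\ b <= a).
Proof.
by case: (leP a b) => ab; [case: (leP 0 a) | case: (leP 0 b)]; lra.
Qed.

Lemma max0_min_lipschitz (a b a' b' : R) :
  `|Num.max 0 (Num.min a b) - Num.max 0 (Num.min a' b')| <= `|a - a'| + `|b - b'|.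
Proof.
have := ler_norm (a - a'); have := ler_norm (a' - a); rewrite (distrC a' a).
have := ler_norm (b - b'); have := ler_norm (b' - b); rewrite (distrC b' b).
rewrite ler_norml => *; apply/andP.
by case: (max0_minP a b) => [[-> ?]|[[-> [? ?]]|[-> [? ?]]]];
  case: (max0_minP a' b') => [[-> ?]|[[-> [? ?]]|[-> [? ?]]]]; split; lra.
Qed.

Section Slide.
Variables (T T' : choiceType) (A : set T) (le : T -> T -> Prop).
Variables (A' : set T') (le' : T' -> T' -> Prop).
Hypothesis A_antisym : forall x y, A x -> A y -> le x y -> le y x -> x = y.
Hypothesis A_trans : forall x y z, A x -> A y -> A z -> le x y -> le y z -> le x z.
Hypothesis A'_trans :
  forall x y z, A' x -> A' y -> A' z -> le' x y -> le' y z -> le' x z.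
Variables phi psi : T -> T'.
Hypothesis phiA : forall x, A x -> A' (phi x).
Hypothesis psiA : forall x, A x -> A' (psi x).
Hypothesis phi_mono : forall x y, A x -> A y -> le x y -> le' (phi x) (phi y).
Hypothesis psi_mono : forall x y, A x -> A y -> le x y -> le' (psi x) (psi y).
Hypothesis phi_le_psi : forall x, A x -> le' (phi x) (psi x).
Implicit Types (t : T -> R) (s : R) (x y : T) (z : T') (X : {fset T}).

Definition mass_below t x : R :=
  \sum_(y \in supp t) (if `[< le y x /\ y <> x >] then t y else 0).
Definition lower t s x := Num.max 0 (Num.min (t x) (1 - clamp s - mass_below t x)).
Definition upper t s x := t x - lower t s x.
Definition slide t s z := push phi (lower t s) z + push psi (upper t s) z.

Lemma mass_below_fset t x X : (forall y, t y != 0 -> y \in X) ->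
  mass_below t x = \sum_(y <- X) (if `[< le y x /\ y <> x >] then t y else 0).
Proof.
move=> tX; rewrite /mass_below (fsbig_fset (X := X)) => [|y ty _]; last exact: tX.
apply: eq_bigr => y _; case: ifPn => // /negP ny; case: ifP => // _.
by apply/esym/eqP; apply: contraT => ty; exfalso; apply/ny/mem_set.
Qed.

Lemma mass_below_ge0 t x : (forall y, 0 <= t y) -> 0 <= mass_below t x.
Proof. by move=> t_ge0; apply: fsumr_ge0 => y _; case: ifP. Qed.

Lemma mass_below_lt t x y : geom_pt A le t -> supp t x -> supp t y ->
  le x y -> x <> y -> mass_below t x + t x <= mass_below t y.
Proof.
case=> fin tA t_ge0 _ _ tx ty lxy nxy.
have tX := supp_fset_set fin (@subset_refl _ _).
rewrite (mass_below_fset x tX) (mass_below_fset y tX).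
rewrite -[t x](sumr_pred1_seq _ (tX x tx)) ?fset_uniq // -big_split /=.
apply: ler_sum => w _; have := t_ge0 w.
case: (asboolP (le w x /\ w <> x)) => [[lwx nwx]|nwx];
  case: (asboolP (le w y /\ w <> y)) => [[lwy nwy]|nwy];
  case: (eqVneq x w) => [xw|nxw]; rewrite ?addr0 ?add0r //; try lra.
- by move: nwx; rewrite xw.
- by move: nwx; rewrite xw.
- have [->|tw] := eqVneq (t w) 0; first by [].
  exfalso; apply: nwy; split; first exact: (A_trans (tA _ tw) (tA _ tx) (tA _ ty)).
  by move=> wy; rewrite wy in lwx; apply/nxy/A_antisym => //; apply: tA.
- by move=> _; rewrite xw.
- by exfalso; apply: nwy; rewrite -xw.
Qed.

Lemma mass_below_le1 t x : geom_pt A le t -> supp t x -> mass_below t x + t x <= 1.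
Proof.
move=> tP tx; case: (tP) => fin _ t_ge0 _ _.
have tX := supp_fset_set fin (@subset_refl _ _).
rewrite (mass_below_fset x tX) -(geom_pt_sum tP tX).
rewrite -[t x](sumr_pred1_seq _ (tX x tx)) ?fset_uniq // -big_split /=.
apply: ler_sum => w _; have := t_ge0 w.
case: (asboolP (le w x /\ w <> x)) => [[_ nwx]|_]; case: (eqVneq x w) => [xw|_];
  rewrite ?addr0 ?add0r //; try lra.
- by move: nwx; rewrite xw.
- by move=> _; rewrite xw.
Qed.

Lemma lowerP t s x :
  (lower t s x = 0 /\ (t x <= 0 \/ 1 - clamp s - mass_below t x <= 0)) \/
  (lower t s x = t x /\ 0 <= t x /\ t x <= 1 - clamp s - mass_below t x) \/
  (lower t s x = 1 - clamp s - mass_below t x /\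
    0 <= 1 - clamp s - mass_below t x /\ 1 - clamp s - mass_below t x <= t x).
Proof. exact: max0_minP. Qed.

Lemma lower_ge0 t s x : 0 <= lower t s x.
Proof. by case: (lowerP t s x); lra. Qed.

Lemma upper_ge0 t s x : 0 <= t x -> 0 <= upper t s x.
Proof. by rewrite /upper; case: (lowerP t s x); lra. Qed.

Lemma lower_neq0 t s x : lower t s x != 0 -> t x != 0.
Proof.
by apply: contraNN => /eqP tx; apply/eqP; move: (lowerP t s x); rewrite tx; lra.
Qed.

Lemma upper_neq0 t s x : upper t s x != 0 -> t x != 0.
Proof.
apply: contraNN => /eqP tx; apply/eqP; rewrite /upper.
by move: (lowerP t s x); rewrite tx; lra.
Qed.

Lemma lower_neq0_mass t s x : lower t s x != 0 -> mass_below t x < 1 - clamp s.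
Proof. by move=> /eqP lx; move: (lowerP t s x); lra. Qed.

Lemma upper_neq0_mass t s x : 0 <= t x -> upper t s x != 0 ->
  1 - clamp s < mass_below t x + t x.
Proof. by move=> tx_ge0 /eqP; rewrite /upper; move: (lowerP t s x); lra. Qed.

(* The lower mass of t occupies an initial segment of the chain supp t. *)
Lemma lower_upper_le t s x y : geom_pt A le t -> lower t s x != 0 -> upper t s y != 0 ->
  le' (phi x) (psi y).
Proof.
move=> tP lx uy; case: (tP) => _ tA t_ge0 _ chain.
have tx := lower_neq0 lx; have ty := upper_neq0 uy.
case: (chain x y tx ty) => [lxy|lyx].
  apply: (A'_trans (phiA (tA _ tx)) (phiA (tA _ ty)) (psiA (tA _ ty))).
    exact: phi_mono (tA _ tx) (tA _ ty) lxy.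
  exact: phi_le_psi (tA _ ty).
have [->|nyx] := eqVneq y x; first exact: phi_le_psi (tA _ tx).
have := mass_below_lt tP ty tx lyx (elimN eqP nyx).
by have := lower_neq0_mass lx; have := upper_neq0_mass (t_ge0 y) uy; lra.
Qed.

Lemma slide_neq0 t s z : slide t s z != 0 ->
  (exists2 x, lower t s x != 0 & phi x = z) \/
  (exists2 x, upper t s x != 0 & psi x = z).
Proof.
rewrite /slide; have [->|lz _] := eqVneq (push phi (lower t s) z) 0.
  by rewrite add0r => /push_neq0; right.
by left; apply: push_neq0.
Qed.

Lemma slide_supp (S : set T) t s : supp t `<=` S ->
  supp (slide t s) `<=` [set phi x | x in S] `|` [set psi x | x in S].
Proof.
move=> tS z /slide_neq0 [[x lx <-]|[x ux <-]]; [left|right]; exists x => //.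
  exact/tS/(lower_neq0 lx).
exact/tS/(upper_neq0 ux).
Qed.

Lemma slide_geom_pt t s : geom_pt A le t -> geom_pt A' le' (slide t s).
Proof.
move=> tP; case: (tP) => fin tA t_ge0 _ chain.
pose S' := [set phi x | x in supp t] `|` [set psi x | x in supp t].
have finS' : finite_set S' by rewrite finite_setU; split; apply: finite_image.
have slideS' := slide_supp (s := s) (@subset_refl _ (supp t)).
have tX := supp_fset_set fin (@subset_refl _ _).
have lX y : lower t s y != 0 -> y \in fset_set (supp t) by move/lower_neq0/tX.
have uX y : upper t s y != 0 -> y \in fset_set (supp t) by move/upper_neq0/tX.
split.
- exact: sub_finite_set slideS' finS'.
- by move=> z /slideS' [[x tx <-]|[x tx <-]]; [apply: phiA | apply: psiA]; apply: tA.
- move=> z; apply: addr_ge0; apply: fsumr_ge0 => x _.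
    exact: lower_ge0.
  exact: upper_ge0.
- rewrite (fsbig_supp (X := fset_set S')) => [|z]; last first.
    exact: supp_fset_set finS' slideS' z.
  under eq_bigr => z _ do rewrite /slide (push_fset _ _ lX) (push_fset _ _ uX).
  rewrite big_split /= exchange_big /= [X in _ + X]exchange_big /=.
  rewrite -(geom_pt_sum tP tX) -big_split /=; apply: eq_big_seq => x.
  rewrite in_fset_set // => /set_mem tx.
  rewrite !sumr_pred1_seq ?fset_uniq //; first by rewrite /upper addrC subrK.
    by rewrite in_fset_set //; apply: mem_set; right; exists x.
  by rewrite in_fset_set //; apply: mem_set; left; exists x.
- move=> z1 z2 /slide_neq0 [[x1 l1 <-]|[x1 u1 <-]] /slide_neq0 [[x2 l2 <-]|[x2 u2 <-]].
  + have tx1 := lower_neq0 l1; have tx2 := lower_neq0 l2.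
    by case: (chain x1 x2 tx1 tx2) => ?; [left|right]; apply: phi_mono => //; apply: tA.
  + by left; exact: lower_upper_le tP l1 u2.
  + by right; exact: lower_upper_le tP l2 u1.
  + have tx1 := upper_neq0 u1; have tx2 := upper_neq0 u2.
    by case: (chain x1 x2 tx1 tx2) => ?; [left|right]; apply: psi_mono => //; apply: tA.
Qed.

Section Lipschitz.
Variables (X : {fset T}) (t t' : T -> R) (s s' d : R).
Hypotheses (tX : forall x, t x != 0 -> x \in X) (t'X : forall x, t' x != 0 -> x \in X).
Hypotheses (d_ge0 : 0 <= d) (tt' : forall x, `|t x - t' x| <= d).
Let N : R := (size X)%:R.

Lemma mass_below_lipschitz x : `|mass_below t x - mass_below t' x| <= N * d.
Proof.
rewrite (mass_below_fset x tX) (mass_below_fset x t'X) -sumrB.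
by apply: ler_norm_sum_size => y; case: ifP => _; rewrite ?subrr ?normr0.
Qed.

Lemma lower_lipschitz x : `|lower t s x - lower t' s' x| <= d + `|s - s'| + N * d.
Proof.
apply: le_trans (max0_min_lipschitz _ _ _ _) _.
have := tt' x; have := mass_below_lipschitz x; have := clamp_lipschitz s s'.
set u := mass_below t x - mass_below t' x; set v := clamp s - clamp s'.
have -> : 1 - clamp s - mass_below t x - (1 - clamp s' - mass_below t' x) = - (v + u).
  by rewrite /u /v; ring.
by rewrite normrN; have := ler_normD v u; lra.
Qed.

Lemma upper_lipschitz x : `|upper t s x - upper t' s' x| <= d + (d + `|s - s'| + N * d).
Proof.
have -> : upper t s x - upper t' s' x = (t x - t' x) - (lower t s x - lower t' s' x).
  by rewrite /upper; ring.
apply: le_trans (ler_normB _ _) _.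
by apply: lerD; [exact: tt' | exact: lower_lipschitz].
Qed.

Lemma slide_lipschitz z :
  `|slide t s z - slide t' s' z| <= 4 * (N + 1) ^+ 2 * (d + `|s - s'|).
Proof.
have lX t0 s0 : (forall x, t0 x != 0 -> x \in X) ->
    forall y, lower t0 s0 y != 0 -> y \in X.
  by move=> t0X y /lower_neq0 /t0X.
have uX t0 s0 : (forall x, t0 x != 0 -> x \in X) ->
    forall y, upper t0 s0 y != 0 -> y \in X.
  by move=> t0X y /upper_neq0 /t0X.
have N_ge0 : 0 <= N by rewrite ler0n.
have B_ge0 : 0 <= d + `|s - s'| + N * d.
  by rewrite addr_ge0 ?mulr_ge0 // addr_ge0.
have := push_lipschitz phi z (lX _ s tX) (lX _ s' t'X) B_ge0 lower_lipschitz.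
have := push_lipschitz psi z (uX _ s tX) (uX _ s' t'X) (addr_ge0 d_ge0 B_ge0)
  upper_lipschitz.
rewrite /slide -/N; set p1 := push phi _ z; set p2 := push psi _ z.
set p1' := push phi _ z; set p2' := push psi _ z => h2 h1.
have -> : p1 + p2 - (p1' + p2') = (p1 - p1') + (p2 - p2') by ring.
apply: le_trans (ler_normD _ _) _; apply: le_trans (lerD h1 h2) _.
have := normr_ge0 (s - s'); have := mulr_ge0 N_ge0 d_ge0; nra.
Qed.

End Lipschitz.

Definition slide_real (ps : realization A le * R) : realization A' le' :=
  exist _ (slide (sval ps.1) ps.2) (slide_geom_pt ps.2 (proj2_sig ps.1)).

Lemma slide_real_continuous : continuous slide_real.
Proof.
apply: weak_lipschitz_continuous => S finS.
  exists ([set phi x | x in S] `|` [set psi x | x in S]).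
    by rewrite finite_setU; split; apply: finite_image.
  by move=> p s; apply: slide_supp.
exists (4 * ((size (fset_set S))%:R + 1) ^+ 2).
  by rewrite mulr_gt0 // exprn_gt0 // ltr_pwDr // ler0n.
move=> p q s s' d pS qS d_ge0 pq z.
by apply: slide_lipschitz; rewrite // => x; apply: supp_fset_set.
Qed.

Lemma slide_real0 p : sval (slide_real (p, 0)) = push phi (sval p).
Proof.
have pP := proj2_sig p; case: (pP) => _ _ p_ge0 _ _.
have lower0 : lower (sval p) 0 = sval p.
  apply/funext => x; rewrite /lower clamp0 subr0.
  have [->|px] := eqVneq (sval p x) 0.
    by move: (max0_minP 0 (1 - mass_below (sval p) x)); lra.
  have := mass_below_le1 pP px; have := p_ge0 x.
  by move: (max0_minP (sval p x) (1 - mass_below (sval p) x)); lra.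
apply/funext => z; rewrite /= /slide lower0 (_ : upper _ _ = fun=> 0) ?push0 ?addr0 //.
by apply/funext => x; rewrite /upper lower0 subrr.
Qed.

Lemma slide_real1 p : sval (slide_real (p, 1)) = push psi (sval p).
Proof.
have lower1 : lower (sval p) 1 = fun=> 0.
  apply/funext => x; rewrite /lower clamp1 subrr.
  case: (proj2_sig p) => _ _ p_ge0 _ _; have := mass_below_ge0 x p_ge0.
  by move: (max0_minP (sval p x) (0 - mass_below (sval p) x)); lra.
apply/funext => z; rewrite /= /slide lower1 (_ : upper _ _ = sval p) ?push0 ?add0r //.
by apply/funext => x; rewrite /upper lower1 subr0.
Qed.

Lemma push_homotopic_le : push_homotopic A le A' le' phi psi.
Proof.
exists slide_real; split; first exact: slide_real_continuous.
by split; [exact: slide_real0 | exact: slide_real1].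
Qed.

End Slide.

Lemma homle_antisym (X Y : bigraph) (eta eta' : mhT X Y) :
  homle eta eta' -> homle eta' eta -> eta = eta'.
Proof.
by move=> ee' e'e; apply/funext => v; apply/seteqP; split; [apply: ee' | apply: e'e].
Qed.

Lemma homle_trans (X Y : bigraph) (eta1 eta2 eta3 : mhT X Y) :
  homle eta1 eta2 -> homle eta2 eta3 -> homle eta1 eta3.
Proof. by move=> e12 e23 v a /e12 /e23. Qed.

Definition mh_comp (X Y Z : bigraph) (eta : mhT Y Z) (xi : mhT X Y) : mhT X Z :=
  fun v => \bigcup_(a in xi v) eta a.

Lemma multihom2_comp (X Y Z : bigraph) (eta : mhT Y Z) (xi : mhT X Y) :
  multihom2 eta -> multihom2 xi -> multihom2 (mh_comp eta xi).
Proof.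
case=> eta_fin eta_hom eta_col [xi_fin xi_hom xi_col]; split.
- move=> v; have [xi_v_fin [a xa]] := xi_fin v; split.
    by apply: bigcup_finite => // a' _; exact: (eta_fin a').1.
  by have [_ [b eb]] := eta_fin a; exists b; exists a.
- move=> v w vw a' b' [a xa ea] [b xb eb].
  by apply: (eta_hom a b) => //; exact: xi_hom vw a b xa xb.
- by move=> v a' [a xa ea]; rewrite (eta_col _ _ ea); exact: xi_col.
Qed.

Lemma multihom2_mh_of (Y Z : bigraph) (f : bV Y -> bV Z) :
  bihom f -> multihom2 (mh_of f : mhT Y Z).
Proof.
case=> f_hom f_col; split.
- by move=> v; split; [exact: finite_set1 | exists (f v)].
- by move=> v w vw a b /= -> ->; apply: f_hom.
- by move=> v a /= ->; apply: f_col.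
Qed.

Lemma fstar_mh_comp (X Y Z : bigraph) (f : bV Y -> bV Z) :
  @fstar X Y Z f = mh_comp (mh_of f).
Proof.
apply/funext => xi; apply/funext => v; apply/seteqP; split => b.
  by case=> a xa <-; exists a.
by case=> a xa /= ->; exists a.
Qed.

Lemma mh_comp_homotopic (X Y Z : bigraph) (eta eta' : mhT Y Z) :
  multihom2 eta -> multihom2 eta' -> homle eta eta' ->
  push_homotopic (@multihom2 X Y) (@homle X Y) (@multihom2 X Z) (@homle X Z)
    (mh_comp eta) (mh_comp eta').
Proof.
move=> eta2 eta'2 le_eta; apply: push_homotopic_le.
- by move=> xi1 xi2 _ _; apply: homle_antisym.
- by move=> xi1 xi2 xi3 _ _ _; apply: homle_trans.
- by move=> xi1 xi2 xi3 _ _ _; apply: homle_trans.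
- by move=> xi; apply: multihom2_comp.
- by move=> xi; apply: multihom2_comp.
- by move=> xi1 xi2 _ _ le_xi v b [a xa ea]; exists a => //; apply: le_xi.
- by move=> xi1 xi2 _ _ le_xi v b [a xa ea]; exists a => //; apply: le_xi.
- by move=> xi _ v b [a xa ea]; exists a => //; apply: le_eta.
Qed.

Theorem lemma3p1 (Y Z : bigraph) (f g : bV Y -> bV Z) :
  bihom f -> bihom g -> xhomotopic f g ->
  forall X : bigraph,
  exists H : HomK2 X Y * R -> HomK2 X Z,
    {within [set pt | 0 <= pt.2 <= 1], continuous H} /\
    (forall p : HomK2 X Y, sval (H (p, 0)) = push (@fstar X Y Z f) (sval p)) /\
    (forall p : HomK2 X Y, sval (H (p, 1)) = push (@fstar X Y Z g) (sval p)).
Proof.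
move=> bf bg [pf [pg [epf [epg pf_pg]]]] X.
pose P eta := push_homotopic (@multihom2 X Y) (@homle X Y) (@multihom2 X Z) (@homle X Z)
  (mh_comp (mh_of f)) (mh_comp eta).
have P_comparable eta eta' : multihom2 eta -> multihom2 eta' -> homle eta eta' ->
    P eta <-> P eta'.
  move=> eta2 eta'2 le_eta; have hom := mh_comp_homotopic X eta2 eta'2 le_eta.
  split=> Peta; first exact: push_homotopic_trans Peta hom.
  exact: push_homotopic_trans Peta (push_homotopic_sym hom).
have [|eta] := realization_component_supp P_comparable pf_pg.
  rewrite epf supp_vertex; exists (mh_of f) => //.
  by apply: mh_comp_homotopic; [exact: multihom2_mh_of.. | move=> v].
rewrite epg supp_vertex => -> [H [cH [H0 H1]]].
by exists H; split; [exact: continuous_subspaceT | rewrite !fstar_mh_comp].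
Qed.
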